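(* Let $N_7$ be the connected, simply connected nilpotent Lie group with Lie algebra $\mathfrak{n}_7$ spanned by $X_1,\dots,X_7$ with non-trivial brackets $[X_1,X_3]=X_5,\ [X_1,X_4]=X_6,\ [X_1,X_5]=X_7,\ [X_2,X_3]=-X_6,\ [X_2,X_4]=X_5,\ [X_2,X_6]=X_7$. Let $\Gamma_2\subset\mathfrak{n}_7^*/N_7$ be the set of coadjoint orbits of linear functionals $f=\sum_i f_iX_i^*$ with $f_7\neq 0$. Then $\Gamma_2$, with the relative topology of the orbit space $\mathfrak{n}_7^*/N_7$ (quotient topology), is Hausdorff, and $\Gamma_2$ is homeomorphic to $\mathbb R^2\times\mathbb R^*$ via $(f_3,f_4,f_7)\mapsto \mathcal O_{(f_3,f_4,f_7)}$.
   Context: $N_7$ acts on $\mathfrak{n}_7^*$ by the coadjoint action $\mathrm{Ad}^*(g)f=f\circ\mathrm{Ad}(g^{-1})$; $X_1^*,\dots,X_7^*$ is the dual basis. For $f_7\neq0$, every coadjoint orbit with $X_7^*$-coordinate $f_7$ contains exactly one functional of the form $f_3X_3^*+f_4X_4^*+f_7X_7^*$, and $\mathcal O_{(f_3,f_4,f_7)}$ denotes the orbit of this functional; explicitly $\mathcal O_{(f_3,f_4,f_7)}=\{(x_1,x_2,f_3+\frac{x_5^2-x_6^2}{2f_7},f_4+\frac{x_5x_6}{f_7},x_5,x_6,f_7): x_1,x_2,x_5,x_6\in\mathbb R\}$ in coordinates with respect to $X_1^*,\dots,X_7^*$. *)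

From HB Require Import structures.
From mathcomp Require Import all_boot all_order all_algebra.
From mathcomp Require Import all_classical all_reals all_analysis.
Set Implicit Arguments. Unset Strict Implicit. Unset Printing Implicit Defensive.
Import Order.TTheory GRing.Theory Num.Theory.
Import numFieldNormedType.Exports.
Local Open Scope classical_set_scope.
Local Open Scope ring_scope.

(* Coordinates: index i : 'I_7 (0-based) corresponds to X_{i+1} (resp. X_{i+1}^* ).
   Elements of n7 and of n7^* are both represented as row vectors 'rV[R]_7;
   a functional f acts on Y by  pairing f Y = \sum_i f_i Y_i. *)

Section N7.
Variable R : realType.
Notation V := 'rV[R]_7.

Definition i7 (k : nat) : 'I_7 := inord k.

Definition n7_bracket (x y : V) : V :=
  \row_(k < 7)
    (if val k == 4%N then
       x 0 (i7 0) * y 0 (i7 2) - x 0 (i7 2) * y 0 (i7 0)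
     + (x 0 (i7 1) * y 0 (i7 3) - x 0 (i7 3) * y 0 (i7 1))
     else if val k == 5%N then
       x 0 (i7 0) * y 0 (i7 3) - x 0 (i7 3) * y 0 (i7 0)
     - (x 0 (i7 1) * y 0 (i7 2) - x 0 (i7 2) * y 0 (i7 1))
     else if val k == 6%N then
       x 0 (i7 0) * y 0 (i7 4) - x 0 (i7 4) * y 0 (i7 0)
     + (x 0 (i7 1) * y 0 (i7 5) - x 0 (i7 5) * y 0 (i7 1))
     else 0).

(* Ad(exp X) Y = exp(ad X) Y = \sum_k (ad X)^k Y / k!  (finite: n7 is nilpotent). *)
Definition Ad_exp (x y : V) : V :=
  \sum_(k < 7) ((k`!)%:R)^-1 *: iter k (n7_bracket x) y.

Definition pairing (f y : V) : R := \sum_(i < 7) f 0 i * y 0 i.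

(* Coadjoint action of g = exp X :  Ad^*(g) f = f o Ad(g^{-1}) = f o Ad(exp(-X)). *)
Definition coadjoint (x f : V) : V :=
  \row_(j < 7) pairing f (Ad_exp (- x) (delta_mx 0 j)).

(* Coadjoint orbit of f (exp : n7 -> N7 is onto since N7 is connected,
   simply connected and nilpotent). *)
Definition coad_orbit (f : V) : set V := [set g | exists x : V, g = coadjoint x f].

(* The orbit space n7^*/N7 as the set of coadjoint orbits, with the quotient
   topology: a family U of orbits is open iff its preimage under the
   canonical projection f |-> coad_orbit f is open in n7^*. *)
Definition orbit_space : set (set V) := [set O | exists f : V, O = coad_orbit f].

Definition orbit_open (U : set (set V)) : Prop :=
  U `<=` orbit_space /\ open [set f : V | U (coad_orbit f)].

Definition Gamma2 : set (set V) :=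
  [set O | exists f : V, f 0 (i7 6) != 0 /\ O = coad_orbit f].

Definition Gamma2_open (W : set (set V)) : Prop :=
  exists U, orbit_open U /\ W = U `&` Gamma2.

Definition std_functional (p : R * R * R) : V :=
  \row_(k < 7) (if val k == 2%N then p.1.1 else if val k == 3%N then p.1.2
                else if val k == 6%N then p.2 else 0).

Definition Phi (p : R * R * R) : set V := coad_orbit (std_functional p).

Definition dom_R2Rstar : set (R * R * R) := [set p | p.2 != 0].

Definition dom_open (A : set (R * R * R)) : Prop :=
  exists B : set (R * R * R), open B /\ A = B `&` dom_R2Rstar.

End N7.

From HB Require Import structures.
From mathcomp Require Import all_boot all_order all_algebra.
From mathcomp Require Import all_classical all_reals all_analysis.
From mathcomp Require Import ring.
Import Order.TTheory GRing.Theory Num.Theory.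
Import numFieldNormedType.Exports.
Local Open Scope classical_set_scope.
Local Open Scope ring_scope.

Set Implicit Arguments.
Unset Strict Implicit.
Unset Printing Implicit Defensive.

(* Since ad(X)^3 = 0, the coadjoint action is quadratic in X.  For f_7 <> 0
   the three functions
     f_3 - (f_5^2 - f_6^2)/(2 f_7),   f_4 - f_5 f_6 / f_7,   f_7
   are invariant, while exp(a_1 X_1 + a_2 X_2 + a_5 X_5 + a_6 X_6) moves
   (f_1, f_2, f_5, f_6) to any prescribed value; so the orbits in Gamma_2 are
   exactly the level sets of this rational map [orbit_param], O_p being the
   level set at p.  The map is continuous on the open saturated set
   {f_7 <> 0}, so a set of orbits is open in Gamma_2 iff its parameters form
   an open subset of R^2 x R^*: Phi is a homeomorphism, and Gamma_2 inherits
   Hausdorffness from R^3. *)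

Lemma val_i7 k : (k < 7)%N -> val (i7 k) = k.
Proof. exact: inordK. Qed.

Lemma eq_i7 k m : (k < 7)%N -> (m < 7)%N -> (i7 k == i7 m) = (k == m).
Proof. by move=> ? ?; rewrite -val_eqE /= !val_i7. Qed.

Lemma i7_val (j : 'I_7) : i7 j = j.
Proof. exact: inord_val. Qed.

Section N7.
Variable R : realType.
Local Notation V := 'rV[R]_7.
Local Notation "v `[ k ]" := (v 0 (i7 k)) (at level 2, format "v `[ k ]").

Lemma sum_ord7 (F : 'I_7 -> R) :
  \sum_(i < 7) F i = F (i7 0) + F (i7 1) + F (i7 2) + F (i7 3) + F (i7 4)
                     + F (i7 5) + F (i7 6).
Proof.
rewrite (eq_bigr (fun i : 'I_7 => F (i7 i))) => [|i _]; last by rewrite i7_val.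
by rewrite -(big_mkord xpredT (fun k => F (i7 k))) !big_nat_recl // big_geq // addr0 !addrA.
Qed.

Lemma n7_bracketE (x y : V) k : (k < 7)%N -> (n7_bracket x y)`[k] =
  if k == 4%N then x`[0] * y`[2] - x`[2] * y`[0] + (x`[1] * y`[3] - x`[3] * y`[1])
  else if k == 5%N then x`[0] * y`[3] - x`[3] * y`[0] - (x`[1] * y`[2] - x`[2] * y`[1])
  else if k == 6%N then x`[0] * y`[4] - x`[4] * y`[0] + (x`[1] * y`[5] - x`[5] * y`[1])
  else 0.
Proof. by move=> ?; rewrite mxE val_i7. Qed.

Lemma n7_bracket0l (y : V) : n7_bracket 0 y = 0.
Proof.
apply/rowP => k; rewrite !mxE.
by repeat case: ifP => _; rewrite ?mul0r ?subrr ?addr0.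
Qed.

Lemma n7_bracket0r (x : V) : n7_bracket x 0 = 0.
Proof.
apply/rowP => k; rewrite !mxE.
by repeat case: ifP => _; rewrite ?mulr0 ?subrr ?addr0.
Qed.

Lemma n7_bracket_nil3 (x y : V) :
  n7_bracket x (n7_bracket x (n7_bracket x y)) = 0.
Proof.
apply/rowP => k; rewrite mxE !n7_bracketE //= mxE.
by case: ifP => _; [ring|case: ifP => _; [ring|case: ifP => _; [ring|done]]].
Qed.

Lemma iter_n7_bracket_nil (x y : V) k : iter k.+3 (n7_bracket x) y = 0.
Proof.
elim: k => [|k IHk]; first exact: n7_bracket_nil3.
by rewrite iterS IHk n7_bracket0r.
Qed.

Lemma Ad_expE (x y : V) :
  Ad_exp x y = y + n7_bracket x y + 2^-1 *: n7_bracket x (n7_bracket x y).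
Proof.
rewrite /Ad_exp -(big_mkord xpredT (fun k => (k`!%:R)^-1 *: iter k (n7_bracket x) y)).
rewrite !big_nat_recl // big_geq // !iter_n7_bracket_nil !scaler0 !addr0 /=.
by rewrite !factS fact0 invr1 !scale1r addrA.
Qed.

Lemma Ad_exp0 (y : V) : Ad_exp 0 y = y.
Proof. by rewrite Ad_expE !n7_bracket0l scaler0 !addr0. Qed.

Lemma pairing_delta (f : V) j : pairing f (delta_mx 0 j) = f 0 j.
Proof.
rewrite /pairing (bigD1 j) // big1 => [|i nij]; first by rewrite mxE !eqxx mulr1 /= addr0.
by rewrite mxE eqxx (negbTE nij) mulr0.
Qed.

Lemma pairingD (f y z : V) : pairing f (y + z) = pairing f y + pairing f z.
Proof. by rewrite /pairing -big_split; apply: eq_bigr => i _; rewrite mxE mulrDr. Qed.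

Lemma pairingZ (f y : V) c : pairing f (c *: y) = c * pairing f y.
Proof.
by rewrite /pairing mulr_sumr; apply: eq_bigr => i _; rewrite mxE mulrCA.
Qed.

Lemma pairing_n7_bracket (f x y : V) : pairing f (n7_bracket x y) =
  f`[4] * (x`[0] * y`[2] - x`[2] * y`[0] + (x`[1] * y`[3] - x`[3] * y`[1]))
  + f`[5] * (x`[0] * y`[3] - x`[3] * y`[0] - (x`[1] * y`[2] - x`[2] * y`[1]))
  + f`[6] * (x`[0] * y`[4] - x`[4] * y`[0] + (x`[1] * y`[5] - x`[5] * y`[1])).
Proof. by rewrite /pairing sum_ord7 !n7_bracketE //=; ring. Qed.

Lemma coadjoint0 (f : V) : coadjoint 0 f = f.
Proof. by apply/rowP => j; rewrite mxE oppr0 Ad_exp0 pairing_delta. Qed.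

Definition coadjoint_coord (a f : V) (k : nat) : R :=
  match k with
  | 0%N => f`[0] + a`[2] * f`[4] + a`[3] * f`[5] + a`[4] * f`[6]
           - (a`[0] * a`[2] + a`[1] * a`[3]) * f`[6] / 2
  | 1%N => f`[1] + a`[3] * f`[4] - a`[2] * f`[5] + a`[5] * f`[6]
           + (a`[1] * a`[2] - a`[0] * a`[3]) * f`[6] / 2
  | 2%N => f`[2] - a`[0] * f`[4] + a`[1] * f`[5] + (a`[0] ^+ 2 - a`[1] ^+ 2) * f`[6] / 2
  | 3%N => f`[3] - a`[1] * f`[4] - a`[0] * f`[5] + a`[0] * a`[1] * f`[6]
  | 4%N => f`[4] - a`[0] * f`[6]
  | 5%N => f`[5] - a`[1] * f`[6]
  | _ => f`[6]
  end.

Lemma delta_i7E k m : (k < 7)%N -> (m < 7)%N ->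
  (delta_mx 0 (i7 m) : V)`[k] = (k == m)%:R.
Proof. by move=> ? ?; rewrite mxE eq_i7. Qed.

Lemma coadjointE (a f : V) k :
  (k < 7)%N -> (coadjoint a f)`[k] = coadjoint_coord a f k.
Proof.
move=> lt_k7; rewrite mxE Ad_expE !pairingD pairingZ !pairing_n7_bracket pairing_delta.
rewrite !n7_bracketE // !delta_i7E // !mxE.
by case: k lt_k7 => [|[|[|[|[|[|[|k]]]]]]] //= _; field.
Qed.

Lemma row7P (u v : V) : (forall k, (k < 7)%N -> u`[k] = v`[k]) -> u = v.
Proof. by move=> uv; apply/rowP => j; rewrite -[j]i7_val uv. Qed.

Definition orbit_param (f : V) : R * R * R :=
  (f`[2] - (f`[4] ^+ 2 - f`[5] ^+ 2) / (2 * f`[6]), f`[3] - f`[4] * f`[5] / f`[6], f`[6]).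

Lemma orbit_param_coadjoint (a f : V) :
  f`[6] != 0 -> orbit_param (coadjoint a f) = orbit_param f.
Proof. by move=> f7; rewrite /orbit_param !coadjointE //=; congr (_, _, _); field. Qed.

Definition transporter (f g : V) : V := \row_(j < 7)
  match val j with
  | 0%N => (f`[4] - g`[4]) / f`[6]
  | 1%N => (f`[5] - g`[5]) / f`[6]
  | 4%N => (g`[0] - f`[0]) / f`[6]
  | 5%N => (g`[1] - f`[1]) / f`[6]
  | _ => 0
  end.

Lemma coadjoint_transporter (f g : V) : f`[6] != 0 ->
  orbit_param g = orbit_param f -> coadjoint (transporter f g) f = g.
Proof.
move=> f7 [e2 e3 e6]; rewrite e6 in e2 e3.
have g2 : g`[2] = f`[2] - (f`[4] ^+ 2 - f`[5] ^+ 2) / (2 * f`[6])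
                  + (g`[4] ^+ 2 - g`[5] ^+ 2) / (2 * f`[6]) by rewrite -e2 subrK.
have g3 : g`[3] = f`[3] - f`[4] * f`[5] / f`[6] + g`[4] * g`[5] / f`[6].
  by rewrite -e3 subrK.
apply: row7P => k lt_k7; rewrite coadjointE //.
case: k lt_k7 => [|[|[|[|[|[|[|k]]]]]]] //= _; rewrite !mxE !val_i7 //=.
all: rewrite ?g2 ?g3 ?e6; by field.
Qed.

Lemma coad_orbitE (f : V) :
  f`[6] != 0 -> coad_orbit f = [set g | orbit_param g = orbit_param f].
Proof.
move=> f7; apply/seteqP; split => g /=; first by move=> [a ->]; rewrite orbit_param_coadjoint.
by move=> eq_fg; exists (transporter f g); rewrite coadjoint_transporter.
Qed.

Lemma mem_coad_orbit (f : V) : coad_orbit f f.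
Proof. by exists 0; rewrite coadjoint0. Qed.

Lemma std_functionalE (p : R * R * R) k : (k < 7)%N -> (std_functional p)`[k] =
  if k == 2%N then p.1.1 else if k == 3%N then p.1.2 else if k == 6%N then p.2 else 0.
Proof. by move=> ?; rewrite mxE val_i7. Qed.

Lemma orbit_param_std (p : R * R * R) : orbit_param (std_functional p) = p.
Proof.
case: p => [[p3 p4] p7]; rewrite /orbit_param !std_functionalE //=.
by rewrite expr0n /= !(mul0r, subrr, subr0).
Qed.

Lemma coad_orbit_eq_Phi (f : V) (p : R * R * R) : p.2 != 0 ->
  coad_orbit f = Phi p <-> f`[6] != 0 /\ orbit_param f = p.
Proof.
move=> p7; have std7 : (std_functional p)`[6] != 0 by rewrite std_functionalE.
rewrite /Phi (coad_orbitE std7) orbit_param_std; split; last first.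
  by move=> [f7 <-]; exact: coad_orbitE.
move=> orbit_f; have /= fp : [set g | orbit_param g = p] f.
  by rewrite -orbit_f; exact: mem_coad_orbit.
by split=> //; move: p7; rewrite -fp.
Qed.

Lemma Phi_orbit_param (f : V) : f`[6] != 0 -> Phi (orbit_param f) = coad_orbit f.
Proof. by move=> f7; apply/esym/coad_orbit_eq_Phi. Qed.

Lemma Phi_inj : {in @dom_R2Rstar R &, injective (@Phi R)}.
Proof.
move=> p q _ /set_mem q7 /coad_orbit_eq_Phi-/(_ q7) [_].
by rewrite orbit_param_std.
Qed.

Lemma orbit_param_continuous (f : V) : f`[6] != 0 -> {for f, continuous orbit_param}.
Proof.
have coordC k : continuous (fun g : V => g`[k]) by exact: coord_continuous.
have sqrC k : continuous (fun g : V => g`[k] ^+ 2).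
  by move=> g; exact: continuous_comp (coordC k g) (@exprn_continuous R 2 _).
move=> f7.
have c2 : {for f, continuous (fun g : V => g`[2] - (g`[4] ^+ 2 - g`[5] ^+ 2) / (2 * g`[6]))}.
  apply: continuousB; first exact: coordC.
  apply: continuousM; first exact: continuousB (sqrC 4 f) (sqrC 5 f).
  apply: continuousV; first by rewrite mulf_neq0 ?pnatr_eq0.
  by apply: continuousM; [exact: cst_continuous | exact: coordC].
have c3 : {for f, continuous (fun g : V => g`[3] - g`[4] * g`[5] / g`[6])}.
  apply: continuousB; first exact: coordC.
  apply: continuousM; first exact: continuousM (coordC 4 f) (coordC 5 f).
  exact: continuousV (coordC 6 f).
exact: cvg_pair (cvg_pair c2 c3) (coordC 6 f).
Qed.

Lemma open_orbit_param_preimage (B : set (R * R * R)) : open B ->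
  open [set f : V | f`[6] != 0 /\ B (orbit_param f)].
Proof.
move=> oB; rewrite openE => f [f7 Bf].
have : nbhs f (orbit_param @^-1` B).
  by apply: orbit_param_continuous => //; exact: open_nbhs_nbhs.
have : nbhs f [set g : V | g`[6] != 0].
  apply: (@coord_continuous R 1 7 0 (i7 6) f [set x | x != 0]).
  by apply: open_nbhs_nbhs; split => //; exact: open_neq.
by apply: filterS2 => g.
Qed.

Lemma std_functional_continuous : continuous (@std_functional R).
Proof.
move=> p A /nbhs_ballP[e e0 eA]; apply/nbhs_ballP; exists e => // q [[pq1 pq2] pq3].
apply: eA; split => // i j; rewrite !mxE.
by do 3 case: ifP => _ //; exact: ballxx.
Qed.

Lemma Phi_Gamma2 (p : R * R * R) : dom_R2Rstar p -> Gamma2 (Phi p).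
Proof. by move=> p7; exists (std_functional p); rewrite std_functionalE. Qed.

Lemma Gamma2_Phi (O : set V) : Gamma2 O -> exists2 p, dom_R2Rstar p & Phi p = O.
Proof. by move=> [f [f7 ->]]; exists (orbit_param f) => //; exact: Phi_orbit_param. Qed.

Lemma Phi_image_saturation (B : set (R * R * R)) :
  [set f : V | (@Phi R @` (B `&` @dom_R2Rstar R)) (coad_orbit f)] =
  [set f : V | f`[6] != 0 /\ B (orbit_param f)].
Proof.
apply/seteqP; split => f /=.
  by move=> [p [Bp p7] /esym /coad_orbit_eq_Phi-/(_ p7) [f7 ->]].
by move=> [f7 Bf]; exists (orbit_param f) => //; exact: Phi_orbit_param.
Qed.

Lemma Gamma2_open_Phi_image (B : set (R * R * R)) :
  open B -> Gamma2_open (@Phi R @` (B `&` @dom_R2Rstar R)).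
Proof.
move=> oB; exists (@Phi R @` (B `&` @dom_R2Rstar R)); split; last first.
  by apply/esym/setIidl => _ [p [_ p7] <-]; exact: Phi_Gamma2.
split; last by rewrite Phi_image_saturation; exact: open_orbit_param_preimage.
by move=> _ [p _ <-]; exists (std_functional p).
Qed.

Lemma Phi_continuous (W : set (set V)) :
  Gamma2_open W -> dom_open [set p | dom_R2Rstar p /\ W (Phi p)].
Proof.
move=> [U [[_ oU] ->]].
exists (@std_functional R @^-1` [set f | U (coad_orbit f)]); split.
  by apply: open_comp oU => p _; exact: std_functional_continuous.
apply/seteqP; split => p /=; first by move=> [p7 [Up _]].
by move=> [Up p7]; do !split => //; exact: Phi_Gamma2.
Qed.

Lemma Gamma2_hausdorff (O1 O2 : set V) : Gamma2 O1 -> Gamma2 O2 -> O1 <> O2 ->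
  exists W1 W2 : set (set V),
    [/\ Gamma2_open W1, Gamma2_open W2, W1 O1, W2 O2 & W1 `&` W2 = set0].
Proof.
move=> /Gamma2_Phi[p1 p1D <-] /Gamma2_Phi[p2 p2D <-] Phi12.
have p12 : p1 != p2 by apply/eqP => p12; apply: Phi12; rewrite p12.
have := @norm_hausdorff R (R * R * R)%type.
rewrite open_hausdorff => /(_ _ _ p12) [[B1 B2] /= [p1B1 p2B2] [oB1 oB2 /eqP B12]].
exists (@Phi R @` (B1 `&` @dom_R2Rstar R)), (@Phi R @` (B2 `&` @dom_R2Rstar R)).
split; do ?exact: Gamma2_open_Phi_image.
- by exists p1 => //; split => //; exact: set_mem.
- by exists p2 => //; split => //; exact: set_mem.
apply/seteqP; split => // _ [[q1 [q1B1 q1D] <-] [q2 [q2B2 q2D]]].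
move=> /(Phi_inj (mem_set q2D) (mem_set q1D)) q21.
have : (B1 `&` B2) q1 by split => //; rewrite -q21.
by rewrite B12.
Qed.

End N7.

Theorem mainTheorem2 (R : realType) :
  (* Gamma2 is Hausdorff in the relative quotient topology *)
  (forall O1 O2 : set 'rV[R]_7, Gamma2 O1 -> Gamma2 O2 -> O1 <> O2 ->
     exists W1 W2 : set (set 'rV[R]_7),
       [/\ Gamma2_open W1, Gamma2_open W2, W1 O1, W2 O2 & W1 `&` W2 = set0])
  /\
  (* Phi : R^2 x R^* -> Gamma2 is a homeomorphism *)
  [/\ (forall p, dom_R2Rstar p -> @Gamma2 R (Phi p)),
      {in @dom_R2Rstar R &, injective (@Phi R)},
      (forall O, Gamma2 O -> exists2 p, @dom_R2Rstar R p & Phi p = O),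
      (* continuity *)
      (forall W : set (set 'rV[R]_7), Gamma2_open W -> dom_open [set p | dom_R2Rstar p /\ W (Phi p)])
    & (* openness (continuity of the inverse) *)
      (forall A : set (R * R * R), dom_open A -> Gamma2_open (@Phi R @` A))].
Proof.
split; first exact: Gamma2_hausdorff.
split.
- exact: Phi_Gamma2.
- exact: Phi_inj.
- exact: Gamma2_Phi.
- exact: Phi_continuous.
- by move=> _ [B [oB ->]]; exact: Gamma2_open_Phi_image.
Qed.
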